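(* Let $n\ge1$, $a>0$, $d>0$, and $t\ge a+d$. Then for every $f\in\mathcal{E}_n^-$, $$|f(t)| \le \left(\frac{2e(t-a)}{d}\right)^n\|f\|_{[a,a+d]} \le \left(\frac{2et}{d}\right)^n\|f\|_{[a,a+d]}.$$
   Context: $\mathcal{E}_n^-$ denotes the set of all functions $f(t)=\sum_{j=1}^na_je^{\lambda_jt}$ ($t\in\mathbb{R}$) with $a_j,\lambda_j\in\mathbb{C}$ and $\mathrm{Re}(\lambda_j)\le0$ for all $j$. $\|f\|_{[a,a+d]}:=\sup_{s\in[a,a+d]}|f(s)|$. *)

From Stdlib Require Import Reals.
Open Scope R_scope.

Definition Cplx := (R * R)%type.

Definition Cadd (z w : Cplx) : Cplx := (fst z + fst w, snd z + snd w).
Definition Cmul (z w : Cplx) : Cplx :=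
  (fst z * fst w - snd z * snd w, fst z * snd w + snd z * fst w).
Definition Cmod (z : Cplx) : R := sqrt (fst z ^ 2 + snd z ^ 2).
Definition Cexp_lin (lam : Cplx) (t : R) : Cplx :=
  (exp (fst lam * t) * cos (snd lam * t), exp (fst lam * t) * sin (snd lam * t)).

(* sum_{j=0}^{n-1} a_j e^{lam_j t}  (indices shifted from 1..n to 0..n-1) *)
Fixpoint expsum (n : nat) (a lam : nat -> Cplx) (t : R) : Cplx :=
  match n with
  | O => (0, 0)
  | S m => Cadd (expsum m a lam t) (Cmul (a m) (Cexp_lin (lam m) t))
  end.

Definition in_En_minus (n : nat) (f : R -> Cplx) : Prop :=
  exists a lam : nat -> Cplx,
    (forall j, (j < n)%nat -> fst (lam j) <= 0) /\
    (forall t, f t = expsum n a lam t).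

Definition is_supnorm (f : R -> Cplx) (a d N : R) : Prop :=
  is_lub (fun y => exists s, a <= s <= a + d /\ y = Cmod (f s)) N.

(* For n = 1, |f| is nonincreasing.  For n = m+1 >= 2, put
   h = d/(m+1) and z = e^{lam_m h}; then g u = f (u+h) - z f u lies in E_m^-, is
   bounded by 2M on [a, a + m h], and |z| <= 1.  The induction hypothesis on that
   shorter interval, summed along the chain s, s-h, s-2h, ... down into [a, a+d]
   through |f (u+h)| <= |g u| + |f u|, gives |f s| <= C (s-a)^{m+1}, and
   (1 + 1/m)^m <= e turns C into M (2e/d)^{m+1}.  The second inequality is
   monotonicity in t - a <= t. *)

From Coquelicot Require Import Complex Rcomplements.
From Stdlib Require Import Reals Lra Lia.
Open Scope R_scope.

Lemma Cmod_Cmul z w : Cmod (Cmul z w) = Cmod z * Cmod w.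
Proof. exact (Cmod_mult z w). Qed.

Lemma Cmod_Cadd_le z w : Cmod (Cadd z w) <= Cmod z + Cmod w.
Proof. exact (Cmod_triangle z w). Qed.

Lemma Cmod_Copp z : Cmod (Copp z) = Cmod z.
Proof. exact (Cmod_opp z). Qed.

Lemma Cmod_nonneg z : 0 <= Cmod z.
Proof. apply Cmod_ge_0. Qed.

Lemma Cmod_Cexp_lin l t : Cmod (Cexp_lin l t) = exp (fst l * t).
Proof.
  unfold Cmod, Cexp_lin; cbn [fst snd].
  replace ((exp (fst l * t) * cos (snd l * t)) ^ 2 + (exp (fst l * t) * sin (snd l * t)) ^ 2)
    with (exp (fst l * t) ^ 2).
  - apply sqrt_pow2; left; apply exp_pos.
  - rewrite <- (Rmult_1_r (exp (fst l * t) ^ 2)), <- (sin2_cos2 (snd l * t)).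
    unfold Rsqr; ring.
Qed.

Lemma Cmod_Cexp_lin_antitone l u v :
  fst l <= 0 -> u <= v -> Cmod (Cexp_lin l v) <= Cmod (Cexp_lin l u).
Proof.
  intros Hl Huv; rewrite !Cmod_Cexp_lin.
  destruct (Req_dec (fst l * v) (fst l * u)) as [E|E]; [rewrite E; lra|].
  left; apply exp_increasing; nra.
Qed.

Lemma Cexp_lin_plus l u h : Cexp_lin l (u + h) = Cmul (Cexp_lin l h) (Cexp_lin l u).
Proof.
  unfold Cexp_lin, Cmul; cbn [fst snd].
  replace (fst l * (u + h)) with (fst l * h + fst l * u) by ring.
  replace (snd l * (u + h)) with (snd l * h + snd l * u) by ring.
  rewrite exp_plus, cos_plus, sin_plus; f_equal; ring.
Qed.

Definition shift_diff (f : R -> Cplx) (z : Cplx) (h u : R) : Cplx :=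
  Cadd (f (u + h)) (Copp (Cmul z (f u))).

Lemma expsum_shift_diff m a lam z h u :
  expsum m (fun j => Cmul (a j) (Cadd (Cexp_lin (lam j) h) (Copp z))) lam u =
  shift_diff (expsum m a lam) z h u.
Proof.
  unfold shift_diff; induction m as [|m IH]; cbn [expsum].
  - unfold Cadd, Copp, Cmul; cbn; f_equal; ring.
  - rewrite IH, Cexp_lin_plus.
    destruct (expsum m a lam (u + h)), (expsum m a lam u), (a m),
      (Cexp_lin (lam m) h), (Cexp_lin (lam m) u), z.
    unfold Cadd, Copp, Cmul; cbn; f_equal; ring.
Qed.

Lemma expsum_S_zero_coef m b lam u :
  b m = (0, 0) -> expsum (S m) b lam u = expsum m b lam u.
Proof.
  intros Hb; cbn [expsum]; rewrite Hb.
  destruct (expsum m b lam u), (Cexp_lin (lam m) u).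
  unfold Cadd, Cmul; cbn; f_equal; ring.
Qed.

(* Multiplying the coefficients by [e^{lam_j h} - z] with [z = e^{lam_m h}] kills the
   last exponential, and [|z| <= 1] because [Re lam_m <= 0]. *)
Lemma in_En_minus_shift_diff m f h :
  0 <= h -> in_En_minus (S m) f ->
  exists z, Cmod z <= 1 /\ in_En_minus m (shift_diff f z h).
Proof.
  intros Hh [a [lam [Hlam Hf]]].
  set (z := Cexp_lin (lam m) h).
  set (b := fun j => Cmul (a j) (Cadd (Cexp_lin (lam j) h) (Copp z))).
  exists z; split.
  - replace 1 with (Cmod (Cexp_lin (lam m) 0))
      by (rewrite Cmod_Cexp_lin, Rmult_0_r; apply exp_0).
    apply Cmod_Cexp_lin_antitone; [apply Hlam; lia | exact Hh].
  - exists b, lam; split; [intros j Hj; apply Hlam; lia|].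
    intros u.
    assert (Hbm : b m = (0, 0)).
    { unfold b, z; destruct (a m), (Cexp_lin (lam m) h).
      unfold Cadd, Copp, Cmul; cbn; f_equal; ring. }
    rewrite <- expsum_S_zero_coef by exact Hbm.
    unfold b; rewrite expsum_shift_diff.
    unfold shift_diff; rewrite !Hf; reflexivity.
Qed.

Lemma in_En_minus_1_antitone f u v :
  in_En_minus 1 f -> u <= v -> Cmod (f v) <= Cmod (f u).
Proof.
  intros [a [lam [Hlam Hf]]] Huv.
  assert (Hf1 : forall t, Cmod (f t) = Cmod (a O) * Cmod (Cexp_lin (lam O) t)).
  { intros t.
    replace (f t) with (Cmul (a O) (Cexp_lin (lam O) t)) by
      (rewrite Hf; cbn [expsum]; destruct (Cmul (a O) (Cexp_lin (lam O) t));
       unfold Cadd; cbn; f_equal; ring).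
    apply Cmod_Cmul. }
  rewrite !Hf1; apply Rmult_le_compat_l; [apply Cmod_nonneg|].
  apply Cmod_Cexp_lin_antitone; [apply Hlam; lia | exact Huv].
Qed.

Lemma Cmod_shift_diff_le f z h u :
  Cmod z <= 1 -> Cmod (f (u + h)) <= Cmod (shift_diff f z h u) + Cmod (f u).
Proof.
  intros Hz; unfold shift_diff.
  replace (f (u + h)) with (Cadd (Cadd (f (u + h)) (Copp (Cmul z (f u)))) (Cmul z (f u))) at 1
    by (destruct (f (u + h)), (Cmul z (f u)); unfold Cadd, Copp; cbn; f_equal; ring).
  eapply Rle_trans; [apply Cmod_Cadd_le|].
  rewrite Cmod_Cmul; generalize (Cmod_nonneg (f u)); nra.
Qed.

Lemma Cmod_shift_diff_bound f z h u M :
  Cmod z <= 1 -> Cmod (f (u + h)) <= M -> Cmod (f u) <= M ->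
  Cmod (shift_diff f z h u) <= 2 * M.
Proof.
  intros Hz H1 H2; unfold shift_diff.
  eapply Rle_trans; [apply Cmod_Cadd_le|].
  rewrite Cmod_Copp, Cmod_Cmul; generalize (Cmod_nonneg (f u)); nra.
Qed.

Lemma telescope_le (F P : R -> R) (h lo s : R) (K : nat) :
  0 <= h -> (forall u, lo <= u -> F (u + h) <= F u + (P (u + h) - P u)) ->
  lo <= s - INR K * h -> F s <= P s - P (s - INR K * h) + F (s - INR K * h).
Proof.
  intros Hh Hstep; induction K as [|K IH]; intros HK.
  - replace (s - INR 0 * h) with s by (cbn; ring); lra.
  - rewrite S_INR in *.
    replace (s - INR K * h) with (s - (INR K + 1) * h + h) in IH by ring.
    specialize (IH ltac:(lra)); specialize (Hstep _ HK); lra.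
Qed.

Lemma pow_succ_add_ge x h m :
  0 < x -> 0 <= h -> x ^ S m + INR (S m) * h * x ^ m <= (x + h) ^ S m.
Proof.
  intros Hx Hh.
  assert (Hb := Rle_pow_lin (h / x) (S m) ltac:(apply Rdiv_le_0_compat; lra)).
  replace (x + h) with (x * (1 + h / x)) by (field; lra).
  rewrite Rpow_mult_distr.
  assert (Hxm : 0 < x ^ S m) by (apply pow_lt; lra).
  apply Rle_trans with (x ^ S m * (1 + INR (S m) * (h / x))); [|apply Rmult_le_compat_l; lra].
  right; cbn [pow]; field; lra.
Qed.

Lemma pow_one_plus_inv_le_exp1 m : (1 <= m)%nat -> (1 + / INR m) ^ m <= exp 1.
Proof.
  intros Hm; assert (Hp : 0 < INR m) by (apply lt_0_INR; lia).
  apply Rle_trans with (exp (/ INR m) ^ m).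
  - apply pow_incr; split.
    + assert (0 < / INR m) by (apply Rinv_0_lt_compat; lra); lra.
    + apply exp_ineq1_le.
  - rewrite <- Rpower_pow by apply exp_pos; unfold Rpower; rewrite ln_exp.
    right; f_equal; field; lra.
Qed.

Lemma nat_mult_bracket h x : 0 < h -> 0 <= x -> exists K : nat, INR K * h <= x <= INR K * h + h.
Proof.
  intros Hh Hx.
  destruct (nfloor_ex (x / h) ltac:(apply Rdiv_le_0_compat; lra)) as [K HK].
  exists K; split.
  - apply Rmult_le_reg_r with (/ h); [apply Rinv_0_lt_compat; lra|].
    replace (INR K * h * / h) with (INR K) by (field; lra); lra.
  - apply Rmult_le_reg_r with (/ h); [apply Rinv_0_lt_compat; lra|].
    replace ((INR K * h + h) * / h) with (INR K + 1) by (field; lra); unfold Rdiv in HK; lra.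
Qed.

Lemma one_le_two_exp1_pow_ratio m :
  (1 <= m)%nat -> 1 <= 2 * (2 * exp 1) ^ m * (INR m / INR (S m)).
Proof.
  intros Hm; assert (Hm1 : 1 <= INR m) by (apply (le_INR 1); exact Hm).
  assert (He : 1 <= 2 * exp 1) by (generalize (exp_ineq1_le 1); lra).
  assert (Hp : 1 <= (2 * exp 1) ^ m) by (apply pow_R1_Rle; exact He).
  assert (Hr : 1 / 2 <= INR m / INR (S m)).
  { rewrite S_INR; apply Rmult_le_reg_r with (2 * (INR m + 1)); [lra|].
    field_simplify; lra. }
  nra.
Qed.

Definition bounded_on (f : R -> Cplx) (a d M : R) : Prop :=
  forall u, a <= u <= a + d -> Cmod (f u) <= M.

Definition growth_bound (n : nat) : Prop :=
  forall f a d M s, in_En_minus n f -> 0 < d -> bounded_on f a d M -> a + d <= s ->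
  Cmod (f s) <= (2 * exp 1 * (s - a) / d) ^ n * M.

Lemma bounded_on_nonneg f a d M : 0 <= d -> bounded_on f a d M -> 0 <= M.
Proof.
  intros Hd HM; apply Rle_trans with (Cmod (f a)); [apply Cmod_nonneg | apply HM; lra].
Qed.

Lemma growth_bound_1 : growth_bound 1.
Proof.
  intros f a d M s Hf Hd HM Hs.
  assert (HM0 := bounded_on_nonneg f a d M ltac:(lra) HM).
  assert (Hfs : Cmod (f s) <= M).
  { apply Rle_trans with (Cmod (f (a + d))); [|apply HM; lra].
    apply in_En_minus_1_antitone; assumption. }
  assert (1 <= 2 * exp 1 * (s - a) / d).
  { generalize (exp_ineq1_le 1); intros He.
    apply Rmult_le_reg_r with d; [exact Hd|].
    unfold Rdiv; rewrite Rmult_assoc, Rinv_l by lra; nra. }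
  cbn [pow]; nra.
Qed.

Section GrowthStep.

Variable m : nat.
Hypothesis Hm : (1 <= m)%nat.
Hypothesis IH : growth_bound m.
Variables (f : R -> Cplx) (a d M : R) (z : Cplx).
Hypothesis Hd : 0 < d.
Hypothesis HM : bounded_on f a d M.
Hypothesis Hz : Cmod z <= 1.

Let h := d / INR (S m).
Hypothesis Hg : in_En_minus m (shift_diff f z h).

(* On [[a, a + m h]] the function [shift_diff f z h] is bounded by [2 M], so the
   induction hypothesis bounds it by [2 M q^m (u-a)^m] with [q = 2e/(m h)];
   dividing by [d = (m+1) h] makes this, via Bernoulli, at most the increment of
   [C (u-a)^(m+1)]. *)
Let C := 2 * M * (2 * exp 1 / (INR m * h)) ^ m / d.

Let HM0 : 0 <= M := bounded_on_nonneg f a d M (Rlt_le _ _ Hd) HM.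
Let Hm1 : 1 <= INR m := le_INR 1 m Hm.

Lemma step_length_pos : 0 < h.
Proof. unfold h; apply Rdiv_lt_0_compat; [exact Hd | apply lt_0_INR; lia]. Qed.

Lemma length_eq_succ_steps : d = INR (S m) * h.
Proof. unfold h; rewrite S_INR; field; lra. Qed.

Lemma step_const_nonneg : 0 <= C.
Proof.
  assert (Hh := step_length_pos).
  unfold C; apply Rdiv_le_0_compat; [|exact Hd].
  apply Rmult_le_pos; [lra | apply pow_le, Rdiv_le_0_compat; [|nra]].
  generalize (exp_pos 1); lra.
Qed.

Lemma step_increment_le u :
  a + INR m * h <= u ->
  Cmod (f (u + h)) <= Cmod (f u) + (C * (u + h - a) ^ S m - C * (u - a) ^ S m).
Proof.
  intros Hu; assert (Hh := step_length_pos); set (q := 2 * exp 1 / (INR m * h)).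
  assert (Hgu : Cmod (shift_diff f z h u) <= 2 * M * q ^ m * (u - a) ^ m).
  { eapply Rle_trans.
    - apply (IH _ a (INR m * h) (2 * M) u Hg ltac:(nra)); [|exact Hu].
      intros v Hv; apply Cmod_shift_diff_bound;
        [exact Hz | apply HM; rewrite length_eq_succ_steps, S_INR; nra ..].
    - right; replace (2 * exp 1 * (u - a) / (INR m * h)) with (q * (u - a))
        by (unfold q; field; nra).
      rewrite Rpow_mult_distr; ring. }
  assert (Hbern := pow_succ_add_ge (u - a) h m ltac:(nra) ltac:(lra)).
  assert (HC : C * (INR (S m) * h * (u - a) ^ m) = 2 * M * q ^ m * (u - a) ^ m).
  { unfold C; fold q; rewrite length_eq_succ_steps, S_INR; field; lra. }
  assert (C * (INR (S m) * h * (u - a) ^ m) <= C * ((u - a + h) ^ S m - (u - a) ^ S m))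
    by (apply Rmult_le_compat_l; [apply step_const_nonneg | lra]).
  eapply Rle_trans; [apply Cmod_shift_diff_le, Hz|].
  replace (u + h - a) with (u - a + h) by ring; lra.
Qed.

Lemma bound_le_step_const : M <= C * (INR m * h) ^ S m.
Proof.
  assert (Hh := step_length_pos).
  replace (C * (INR m * h) ^ S m) with (M * (2 * (2 * exp 1) ^ m * (INR m / INR (S m)))).
  - generalize (one_le_two_exp1_pow_ratio m Hm); nra.
  - unfold C; rewrite length_eq_succ_steps.
    replace ((INR m * h) ^ S m) with ((INR m * h) ^ m * (INR m * h)) by (cbn [pow]; ring).
    replace (2 * M * (2 * exp 1 / (INR m * h)) ^ m / (INR (S m) * h) * ((INR m * h) ^ m * (INR m * h)))
      with (2 * M * (2 * exp 1 / (INR m * h) * (INR m * h)) ^ m * (INR m / INR (S m)))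
      by (rewrite Rpow_mult_distr; rewrite S_INR; field; nra).
    replace (2 * exp 1 / (INR m * h) * (INR m * h)) with (2 * exp 1) by (field; nra).
    ring.
Qed.

Lemma step_const_le : C <= M * (2 * exp 1 / d) ^ S m.
Proof.
  assert (Hh := step_length_pos); assert (He := exp_pos 1).
  assert (HMd : 0 <= M * (2 * exp 1 / d) ^ S m)
    by (apply Rmult_le_pos; [lra | apply pow_le, Rdiv_le_0_compat; lra]).
  assert (Hr : (1 + / INR m) ^ m / exp 1 <= 1).
  { apply Rmult_le_reg_r with (exp 1); [exact He|].
    unfold Rdiv; rewrite Rmult_assoc, Rinv_l by lra.
    generalize (pow_one_plus_inv_le_exp1 m Hm); lra. }
  replace C with (M * (2 * exp 1 / d) ^ S m * ((1 + / INR m) ^ m / exp 1)); [nra|].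
  unfold C; replace (2 * exp 1 / (INR m * h)) with (2 * exp 1 / d * (1 + / INR m))
    by (rewrite length_eq_succ_steps, S_INR; field; nra).
  rewrite Rpow_mult_distr; cbn [pow]; field; lra.
Qed.

(* Telescoping [|f (u+h)| <= |f u| + increment] from [s] down into [[a+m h, a+d]],
   where [|f| <= M <= C (m h)^(m+1)], leaves [|f s| <= C (s-a)^(m+1)]. *)
Lemma growth_bound_step s : a + d <= s -> Cmod (f s) <= (2 * exp 1 * (s - a) / d) ^ S m * M.
Proof.
  intros Hs; assert (Hh := step_length_pos); assert (Hdh := length_eq_succ_steps).
  rewrite S_INR in Hdh.
  destruct (nat_mult_bracket h (s - a - INR m * h) Hh ltac:(nra)) as [K HK].
  set (P := fun u => C * (u - a) ^ S m).
  assert (Htel := telescope_le (fun u => Cmod (f u)) P h (a + INR m * h) s K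
                    ltac:(lra) step_increment_le ltac:(lra)).
  assert (Hlast : Cmod (f (s - INR K * h)) <= P (s - INR K * h)).
  { apply Rle_trans with M; [apply HM; nra|].
    eapply Rle_trans; [apply bound_le_step_const|].
    apply Rmult_le_compat_l; [apply step_const_nonneg | apply pow_incr; nra]. }
  unfold P in Htel, Hlast.
  replace (2 * exp 1 * (s - a) / d) with (2 * exp 1 / d * (s - a)) by (field; lra).
  rewrite Rpow_mult_distr.
  assert (C * (s - a) ^ S m <= M * (2 * exp 1 / d) ^ S m * (s - a) ^ S m)
    by (apply Rmult_le_compat_r; [apply pow_le; lra | apply step_const_le]).
  lra.
Qed.

End GrowthStep.

Lemma growth_bound_S m : (1 <= m)%nat -> growth_bound m -> growth_bound (S m).
Proof.
  intros Hm IH f a d M s Hf Hd HM Hs.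
  assert (Hh : 0 <= d / INR (S m)) by (apply Rdiv_le_0_compat; [lra | apply lt_0_INR; lia]).
  destruct (in_En_minus_shift_diff m f _ Hh Hf) as [z [Hz Hg]].
  exact (growth_bound_step m Hm IH f a d M z Hd HM Hz Hg s Hs).
Qed.

Lemma growth_bound_all n : (1 <= n)%nat -> growth_bound n.
Proof.
  induction n as [|n IH]; intros Hn; [lia|].
  destruct n as [|n]; [exact growth_bound_1|].
  apply growth_bound_S; [lia | apply IH; lia].
Qed.

Theorem lemma12p2 (n : nat) (a d t : R) (f : R -> Cplx) (N : R) :
  (1 <= n)%nat -> 0 < a -> 0 < d -> a + d <= t ->
  in_En_minus n f -> is_supnorm f a d N ->
  Cmod (f t) <= (2 * exp 1 * (t - a) / d) ^ n * N /\
  (2 * exp 1 * (t - a) / d) ^ n * N <= (2 * exp 1 * t / d) ^ n * N.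
Proof.
  intros Hn Ha Hd Ht Hf [Hub _].
  assert (HN : bounded_on f a d N) by (intros u Hu; apply Hub; exists u; split; auto).
  assert (HN0 := bounded_on_nonneg f a d N ltac:(lra) HN).
  split; [exact (growth_bound_all n Hn f a d N t Hf Hd HN Ht)|].
  apply Rmult_le_compat_r; [exact HN0|].
  assert (He := exp_pos 1).
  apply pow_incr; split; unfold Rdiv.
  - apply Rmult_le_pos; [nra | left; apply Rinv_0_lt_compat; lra].
  - apply Rmult_le_compat_r; [left; apply Rinv_0_lt_compat; lra | nra].
Qed.
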